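(* Let $k\ge 1$ and consider a graph stream in which, at each time step $s$, a single new vertex $v_s$ (together with its incident edges) is added, so that the vertex sets satisfy $\mathcal{V}_{s+1}=\mathcal{V}_s\cup\{v_s\}$. Suppose that at some time $t$ the embedding matrix $\mathbf{F}_t\in\mathbb{R}^{|\mathcal{V}_t|\times k}$ is feasible for the round-$t$ optimization problem, i.e. $\mathbf{F}_t^{\top}\mathbf{F}_t=\mathbf{I}_{k\times k}$. For each $T\in\{0,1,2,\dots\}$, let $\mathbf{F}_{t+T+1}$ be obtained from $\mathbf{F}_{t+T}$ by the update procedure described below, where $s=t+T$ and $\mathcal{I}_{s+1}(v_s)$ is the set of influenced vertices at that step. Then for every $t'>t$, the matrix $\mathbf{F}_{t'}$ is feasible for the round-$t'$ problem, i.e. $\mathbf{F}_{t'}^{\top}\mathbf{F}_{t'}=\mathbf{I}_{k\times k}$.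
   Context: Embeddings: at time $s$, $\mathbf{F}_s\in\mathbb{R}^{|\mathcal{V}_s|\times k}$ has one row $(\mathbf{f}^{(s)}_u)^{\top}$ for each vertex $u\in\mathcal{V}_s$. The round-$s$ optimization problem minimizes a loss over $\mathbf{F}_s$ subject to the orthogonality constraint $\mathbf{F}_s^{\top}\mathbf{F}_s=\mathbf{I}_{k\times k}$. A matrix is feasible for this problem exactly when it satisfies this constraint. Influenced set: at each step, when the new vertex $v_s$ arrives, a set $\mathcal{I}_{s+1}(v_s)$ of already-arrived vertices ''influenced'' by $v_s$ is selected. The selection may be random, for example by an independent-cascade process started at $v_s$, run to a depth $D$, in which a vertex $v$ influences a neighbor $u$ with probability $1/(\text{in-degree of } u)$. This set is a nonempty subset of $\mathcal{V}_s$. Update procedure (going from $\mathbf{F}_s$ to $\mathbf{F}_{s+1}$): write $\mathcal{I}=\mathcal{I}_{s+1}(v_s)$. - The new vertex gets the average of the influenced embeddings: $\mathbf{f}^{(s+1)}_{v_s}=\frac{1}{|\mathcal{I}|}\sum_{u\in\mathcal{I}}\mathbf{f}^{(s)}_u$. - Set $\alpha_{s+1}=1-\sqrt{1-\frac{1}{|\mathcal{I}|}}$. - For each $u\in\mathcal{V}_s$: if $u\in\mathcal{I}$, then $\mathbf{f}^{(s+1)}_u=\mathbf{f}^{(s)}_u-\alpha_{s+1}\mathbf{f}^{(s+1)}_{v_s}$; otherwise $\mathbf{f}^{(s+1)}_u=\mathbf{f}^{(s)}_u$. - $\mathbf{F}_{s+1}\in\mathbb{R}^{|\mathcal{V}_{s+1}|\times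 k}$ is the matrix whose rows are $\mathbf{f}^{(s+1)}_u$ for $u\in\mathcal{V}_{s+1}$. *)

From HB Require Import structures.
From mathcomp Require Import all_boot all_order all_algebra.
Set Implicit Arguments. Unset Strict Implicit. Unset Printing Implicit Defensive.
Import Order.TTheory GRing.Theory Num.Theory.
Local Open Scope ring_scope.

Definition emb_mx (R : ringType) (T : Type) (k : nat)
  (f : T -> 'rV[R]_k) (Vs : seq T) : 'M[R]_(size Vs, k) :=
  \matrix_(i < size Vs) f (tnth (in_tuple Vs) i).

Definition feasible (R : ringType) (T : Type) (k : nat)
  (f : T -> 'rV[R]_k) (Vs : seq T) : Prop :=
  (emb_mx f Vs)^T *m emb_mx f Vs = 1%:M.

Definition upd_alpha (R : rcfType) (n : nat) : R :=
  1 - Num.sqrt (1 - (n%:R)^-1).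

(* F^T F is the Gram matrix sum_u f_u^T f_u of the rows.  If m is the mean of
   the n influenced rows, shifting each of them by -a m changes their
   contribution by n (a^2 - 2a) m^T m, and the new row adds m^T m; the choice
   a = 1 - sqrt(1 - 1/n) is exactly the root of n (a^2 - 2a) + 1 = 0, so the
   Gram matrix, hence F^T F = I, is preserved at every step. *)

From HB Require Import structures.
From mathcomp Require Import all_boot all_order all_algebra.
From mathcomp Require Import ring.
Set Implicit Arguments. Unset Strict Implicit. Unset Printing Implicit Defensive.
Import Order.TTheory GRing.Theory Num.Theory.
Local Open Scope ring_scope.

Lemma big_mem_sub (R : Type) (idx : R) (op : Monoid.com_law idx)
    (T : eqType) (V I : seq T) (F : T -> R) :
  uniq V -> uniq I -> {subset I <= V} ->
  \big[op/idx]_(u <- V | u \in I) F u = \big[op/idx]_(u <- I) F u.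
Proof.
move=> uV uI sIV; rewrite -big_filter; apply: perm_big.
apply: uniq_perm => [||x]; rewrite ?filter_uniq // mem_filter.
by apply/andP/idP => [[]|xI] //; split=> //; apply: sIV.
Qed.

Definition gram (R : ringType) (T : Type) (k : nat)
  (f : T -> 'rV[R]_k) (Vs : seq T) : 'M[R]_k :=
  \sum_(u <- Vs) (f u)^T *m f u.

Lemma gram_emb_mx (R : comRingType) (T : Type) (k : nat)
    (f : T -> 'rV[R]_k) (Vs : seq T) :
  (emb_mx f Vs)^T *m emb_mx f Vs = gram f Vs.
Proof.
apply/matrixP => i j; rewrite /gram summxE mxE (big_tuple _ _ (in_tuple Vs)).
by apply: eq_bigr => l _; rewrite !mxE big_ord1 !mxE.
Qed.

Lemma gram_shift_mean (R : comRingType) (T : Type) (k : nat)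
    (h : T -> 'rV[R]_k) (I : seq T) (m : 'rV[R]_k) (a : R) :
  \sum_(u <- I) h u = (size I)%:R *: m ->
  gram (fun u => h u - a *: m) I =
  gram h I + ((size I)%:R * (a ^+ 2 - 2 * a)) *: (m^T *m m).
Proof.
move=> sum_h; rewrite /gram.
have sum_hT : \sum_(u <- I) (h u)^T = (size I)%:R *: m^T.
  by rewrite -linear_sum sum_h linearZ.
have expand u : (h u - a *: m)^T *m (h u - a *: m) =
    (h u)^T *m h u - a *: ((h u)^T *m m + m^T *m h u) + a ^+ 2 *: (m^T *m m).
  have -> : (h u - a *: m)^T = (h u)^T - a *: m^T by rewrite linearB linearZ.
  rewrite mulmxBl !mulmxBr -!scalemxAl -!scalemxAr scalerA -expr2 scalerDr.
  by rewrite opprB opprD !addrA addrAC.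
under eq_bigr do rewrite expand.
rewrite big_split sumrB /= -scaler_sumr big_split /= -mulmx_suml -mulmx_sumr.
rewrite sum_hT sum_h -scalemxAl -scalemxAr.
rewrite big_const_seq count_predT iter_addr_0 -scaler_nat !scalerA -!addrA.
congr (_ + _); rewrite -scalerDl scalerA -scaleNr -scalerDl.
by congr (_ *: _); ring.
Qed.

Lemma upd_alpha_balance (R : rcfType) (n : nat) : (0 < n)%N ->
  n%:R * (upd_alpha R n ^+ 2 - 2 * upd_alpha R n) = -1.
Proof.
move=> n_gt0; have n_neq0 : (n%:R : R) != 0 by rewrite pnatr_eq0 -lt0n.
have sqrt_sq : Num.sqrt (1 - (n%:R : R)^-1) ^+ 2 = 1 - n%:R^-1.
  by rewrite sqr_sqrtr // subr_ge0 invf_le1 ?ltr0n ?ler1n.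
have -> : upd_alpha R n ^+ 2 - 2 * upd_alpha R n =
          Num.sqrt (1 - (n%:R : R)^-1) ^+ 2 - 1 by rewrite /upd_alpha; ring.
by rewrite sqrt_sq addrAC subrr add0r mulrN mulfV.
Qed.

Lemma gram_rcons_update (R : rcfType) (T : eqType) (k : nat)
    (Vs I : seq T) (x : T) (f g : T -> 'rV[R]_k) :
  uniq Vs -> uniq I -> I != [::] -> {subset I <= Vs} ->
  g x = (size I)%:R^-1 *: \sum_(u <- I) f u ->
  {in Vs, forall u,
     g u = if u \in I then f u - upd_alpha R (size I) *: g x else f u} ->
  gram g (rcons Vs x) = gram f Vs.
Proof.
move=> Vs_uniq I_uniq I_neq0 I_sub g_new g_old.
have n_gt0 : (0 < size I)%N by rewrite lt0n size_eq0.
have sum_f : \sum_(u <- I) f u = (size I)%:R *: g x.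
  by rewrite g_new scalerA mulfV ?scale1r // pnatr_eq0 -lt0n.
rewrite /gram big_rcons (bigID (fun u => u \in I)) /=.
rewrite [RHS](bigID (fun u => u \in I)) /=.
have on_I : \sum_(u <- Vs | u \in I) (g u)^T *m g u =
            gram (fun u => f u - upd_alpha R (size I) *: g x) I.
  rewrite /gram -(big_mem_sub _ _ Vs_uniq I_uniq I_sub).
  rewrite [LHS]big_seq_cond [RHS]big_seq_cond; apply: eq_bigr => u /andP[uV uI].
  by rewrite g_old // uI.
have off_I : \sum_(u <- Vs | u \notin I) (g u)^T *m g u =
             \sum_(u <- Vs | u \notin I) (f u)^T *m f u.
  rewrite big_seq_cond [RHS]big_seq_cond; apply: eq_bigr => u /andP[uV uI].
  by rewrite g_old // (negbTE uI).
rewrite on_I off_I (gram_shift_mean _ sum_f) (upd_alpha_balance R n_gt0) scaleN1r.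
by rewrite (big_mem_sub _ _ Vs_uniq I_uniq I_sub) addrAC subrK.
Qed.

Theorem lemma1 (R : rcfType) (T : eqType) (k : nat) (hk : (0 < k)%N)
  (V : nat -> seq T) (v : nat -> T) (I : nat -> seq T)
  (f : nat -> T -> 'rV[R]_k) (t : nat)
  (* graph stream: one new vertex v_s is added at each step *)
  (hVuniq : forall s, uniq (V s))
  (hvnew : forall s, v s \notin V s)
  (hVstep : forall s, V s.+1 = rcons (V s) (v s))
  (* influenced sets I_{s+1}(v_s): nonempty duplicate-free subsets of V_s *)
  (hIuniq : forall s, uniq (I s))
  (hIne : forall s, I s != [::])
  (hIsub : forall s, {subset I s <= V s})
  (* feasibility at time t *)
  (hfeas : feasible (f t) (V t))
  (* update procedure for every step s = t + T, T >= 0 *)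
  (hnew : forall s, (t <= s)%N ->
     f s.+1 (v s) = (size (I s))%:R^-1 *: \sum_(u <- I s) f s u)
  (hold : forall s, (t <= s)%N -> forall u, u \in V s ->
     f s.+1 u = if u \in I s
                then f s u - upd_alpha R (size (I s)) *: f s.+1 (v s)
                else f s u) :
  forall t', (t < t')%N -> feasible (f t') (V t').
Proof.
have feasible_step s :
    (t <= s)%N -> feasible (f s) (V s) -> feasible (f s.+1) (V s.+1).
  move=> le_ts; rewrite /feasible !gram_emb_mx hVstep => <-.
  exact: gram_rcons_update (hVuniq s) (hIuniq s) (hIne s) (hIsub s)
                           (hnew s le_ts) (hold s le_ts).
suff feasible_from s : (t <= s)%N -> feasible (f s) (V s).
  by move=> t' /ltnW; apply: feasible_from.
elim: s => [|s IH]; first by rewrite leqn0 => /eqP <-.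
rewrite leq_eqVlt ltnS => /predU1P[<- // | le_ts].
exact: feasible_step le_ts (IH le_ts).
Qed.
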